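(* Let $P(X)$ be a complex polynomial of degree $n \geq 2$ and $U(X)$ a quadratic polynomial with non-zero discriminant such that \[ U(X)P''(X) - (n-1)U'(X)P'(X) + \frac{n(n-1)}{2}U''(X)P(X) = 0. \] Set $Y_{1}(X) = 2U(X)P'(X) - nU'(X)P(X)$, $h = \frac{n^{2}-1}{4}\left(U'(X)^{2} - 2U(X)U''(X)\right)$ (a constant) and $\lambda = h/(n^{2}-1)$. Define polynomials $A_{r}(X), B_{r}(X)$ by \[ A_{0} = \tfrac{2h}{3},\quad A_{1} = \tfrac{2(n+1)}{3}\left(UP' - \tfrac{n-1}{2}U'P\right),\quad B_{0} = \tfrac{2hX}{3},\quad B_{1} = XA_{1} - \tfrac{2(n+1)UP}{3}, \] and for $r \geq 1$ \[ \lambda(n(r+1)-1)A_{r+1} = \left(r+\tfrac12\right)Y_{1}A_{r} - (nr+1)P^{2}A_{r-1}, \] \[ \lambda(n(r+1)-1)B_{r+1} = \left(r+\tfrac12\right)Y_{1}B_{r} - (nr+1)P^{2}B_{r-1}. \] Let $a,b,c,d$ be complex numbers with $ad-bc \neq 0$, and define $K_{r}(X) = aA_{r}(X) + bB_{r}(X)$ and $L_{r}(X) = cA_{r}(X) + dB_{r}(X)$. If $x$ is such that $U(x)P(x) \neq 0$, then \[ K_{r+1}(x)L_{r}(x) \neq K_{r}(x)L_{r+1}(x) \] for all $r \geq 0$. *)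

From HB Require Import structures.
From mathcomp Require Import all_boot all_order all_algebra.
From mathcomp Require Import complex.
From mathcomp Require Import reals.
Set Implicit Arguments. Unset Strict Implicit. Unset Printing Implicit Defensive.
Import Order.TTheory GRing.Theory Num.Theory.
Local Open Scope ring_scope.

(* Generic two-term recursion: returns (x_r, x_{r+1}) where
   x_0 = x0, x_1 = x1 and x_{s+1} = step s x_{s-1} x_s for s >= 1. *)
Fixpoint rec2 {T : Type} (step : nat -> T -> T -> T) (x0 x1 : T) (r : nat)
  : T * T :=
  match r with
  | 0 => (x0, x1)
  | r'.+1 => let: (u, v) := rec2 step x0 x1 r' in (v, step r'.+1 u v)
  end.

Section Defs.
Variable (F : fieldType).
Implicit Types (P U : {poly F}) (n : nat).

Definition Y1 n P U : {poly F} := 2%:R *: (U * P^`()) - n%:R *: (U^`() * P).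

(* h = (n^2-1)/4 (U'^2 - 2 U U''), a constant polynomial; we take its
   constant coefficient. *)
Definition hconst n U : F :=
  ((n ^ 2 - 1)%:R / 4%:R) * (U^`() ^+ 2 - 2%:R *: (U * U^`(2)))`_0.

Definition lam n U : F := hconst n U / (n ^ 2 - 1)%:R.

Definition ABstep n P U (r : nat) (u v : {poly F}) : {poly F} :=
  (lam n U * (n * r.+1 - 1)%N%:R)^-1 *:
    ((r%:R + 2%:R^-1) *: (Y1 n P U * v) - (n * r + 1)%N%:R *: (P ^+ 2 * u)).

Definition A0 n U : {poly F} := ((2%:R / 3%:R) * hconst n U)%:P.
Definition A1 n P U : {poly F} :=
  (2%:R * (n.+1)%:R / 3%:R) *: (U * P^`() - ((n - 1)%:R / 2%:R) *: (U^`() * P)).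
Definition B0 n U : {poly F} := ((2%:R / 3%:R) * hconst n U) *: 'X.
Definition B1 n P U : {poly F} :=
  'X * A1 n P U - (2%:R * (n.+1)%:R / 3%:R) *: (U * P).

Definition Apoly n P U (r : nat) : {poly F} :=
  (rec2 (ABstep n P U) (A0 n U) (A1 n P U) r).1.
Definition Bpoly n P U (r : nat) : {poly F} :=
  (rec2 (ABstep n P U) (B0 n U) (B1 n P U) r).1.

End Defs.

From HB Require Import structures.
From mathcomp Require Import all_boot all_order all_algebra.
From mathcomp Require Import complex reals ring.
Import Order.TTheory GRing.Theory Num.Theory.
Set Implicit Arguments. Unset Strict Implicit. Unset Printing Implicit Defensive.
Local Open Scope ring_scope.

(* A_r(x) and B_r(x) solve the same three-term recursion
   X_{r+2} = p_r X_{r+1} - q_r X_r, so their Casoratian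
   W_r = A_{r+1}(x) B_r(x) - A_r(x) B_{r+1}(x) satisfies W_{r+1} = q_r W_r, where
   q_r = (n(r+1)+1) P(x)^2 / (lambda (n(r+2)-1)) is nonzero as P(x) != 0.
   Moreover W_0 = (2h/3) (2(n+1)/3) U(x) P(x) != 0, since h is a nonzero
   multiple of the discriminant of U.  Finally the Casoratian of K and L is
   (ad - bc) W_r. *)

Section Casoratian.
Variable R : comPzRingType.
Implicit Types (p q u v : nat -> R).

Definition casoratian u v r := u r.+1 * v r - u r * v r.+1.

Lemma casoratian_lincomb u v a b c d r :
  casoratian (fun s => a * u s + b * v s) (fun s => c * u s + d * v s) r
  = (a * d - b * c) * casoratian u v r.
Proof. by rewrite /casoratian; ring. Qed.

Lemma casoratianS p q u v r :
  u r.+2 = p r * u r.+1 - q r * u r ->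
  v r.+2 = p r * v r.+1 - q r * v r ->
  casoratian u v r.+1 = q r * casoratian u v r.
Proof. by rewrite /casoratian => -> ->; ring. Qed.

End Casoratian.

Lemma casoratian_neq0 (R : idomainType) (p q u v : nat -> R) :
  (forall r, u r.+2 = p r * u r.+1 - q r * u r) ->
  (forall r, v r.+2 = p r * v r.+1 - q r * v r) ->
  (forall r, q r != 0) -> casoratian u v 0 != 0 ->
  forall r, casoratian u v r != 0.
Proof.
move=> recu recv q_neq0 w0; elim=> // r IHr.
by rewrite (casoratianS (recu r) (recv r)) mulf_neq0.
Qed.

Lemma rec2_fst_SS (T : Type) (step : nat -> T -> T -> T) x0 x1 r :
  (rec2 step x0 x1 r.+2).1 =
  step r.+1 (rec2 step x0 x1 r).1 (rec2 step x0 x1 r.+1).1.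
Proof. by rewrite /=; case: (rec2 step x0 x1 r). Qed.

Lemma coef0_sqr_derivB_mul_deriv2 (F : comNzRingType) (U : {poly F}) :
  (U^`() ^+ 2 - 2%:R *: (U * U^`(2)))`_0 = U`_1 ^+ 2 - 4%:R * U`_2 * U`_0.
Proof. by rewrite coefB coefZ !coef0M !coef_deriv /=; ring. Qed.

Section CasoratianAB.
Variables (F : numFieldType) (n : nat) (P U : {poly F}) (x : F).
Hypothesis n_ge2 : (2 <= n)%N.

Let A s := (Apoly n P U s).[x].
Let B s := (Bpoly n P U s).[x].

Let lead r := (lam n U * (n * r.+2 - 1)%N%:R)^-1.
Let p r := lead r * (r.+1%:R + 2%:R^-1) * (Y1 n P U).[x].
Let q r := lead r * (n * r.+1 + 1)%N%:R * P.[x] ^+ 2.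

Lemma horner_ABstep r u v :
  (ABstep n P U r.+1 u v).[x] = p r * v.[x] - q r * u.[x].
Proof.
by rewrite /p /q /lead /ABstep /Y1 !(hornerD, hornerN, hornerZ, hornerM, horner_exp); ring.
Qed.

Lemma Apoly_recursion r : A r.+2 = p r * A r.+1 - q r * A r.
Proof. by rewrite /A /Apoly rec2_fst_SS horner_ABstep. Qed.

Lemma Bpoly_recursion r : B r.+2 = p r * B r.+1 - q r * B r.
Proof. by rewrite /B /Bpoly rec2_fst_SS horner_ABstep. Qed.

Lemma natr_sqrBn1_neq0 : (n ^ 2 - 1)%:R != 0 :> F.
Proof.
by rewrite pnatr_eq0 -lt0n subn_gt0 (@leq_trans (2 ^ 2)) // leq_exp2r.
Qed.

Lemma hconst_neq0 :
  U`_1 ^+ 2 - 4%:R * U`_2 * U`_0 != 0 -> hconst n U != 0.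
Proof.
move=> disc_neq0; rewrite /hconst coef0_sqr_derivB_mul_deriv2.
by rewrite !mulf_neq0 ?invr_eq0 ?natr_sqrBn1_neq0 ?pnatr_eq0.
Qed.

Lemma casoratian_AB_0 :
  casoratian A B 0 =
  (2%:R / 3%:R * hconst n U) * (2%:R * n.+1%:R / 3%:R) * (U.[x] * P.[x]).
Proof.
rewrite /casoratian /A /B /= /B1 /B0 /A0.
by rewrite !(hornerD, hornerN, hornerZ, hornerM, hornerX, hornerC); ring.
Qed.

Lemma casoratian_AB_neq0 :
  U`_1 ^+ 2 - 4%:R * U`_2 * U`_0 != 0 -> U.[x] * P.[x] != 0 ->
  forall r, casoratian A B r != 0.
Proof.
move=> disc_neq0 UPx_neq0.
have Px_neq0 : P.[x] != 0 by move: UPx_neq0; rewrite mulf_eq0 negb_or => /andP[].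
have lam_neq0 : lam n U != 0.
  by rewrite mulf_neq0 ?invr_eq0 ?hconst_neq0 ?natr_sqrBn1_neq0.
have q_neq0 r : q r != 0.
  have nr_gt1 : (1 < n * r.+2)%N by rewrite (leq_trans n_ge2) // leq_pmulr.
  rewrite /q /lead mulf_neq0 ?expf_neq0 // mulf_neq0 ?pnatr_eq0 ?addn1 //.
  by rewrite invr_eq0 mulf_neq0 // pnatr_eq0 -lt0n subn_gt0.
apply: (casoratian_neq0 Apoly_recursion Bpoly_recursion q_neq0).
rewrite casoratian_AB_0; move: (hconst n U) (hconst_neq0 disc_neq0) => h h_neq0.
by rewrite mulf_neq0 // !mulf_neq0 ?invr_eq0 ?pnatr_eq0.
Qed.

End CasoratianAB.

Theorem lemma2p7 (R : realType) (n : nat) (P U : {poly R[i]})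
  (a b c d : R[i]) (x : R[i]) :
  (2 <= n)%N ->
  size P = n.+1 ->
  size U = 3%N ->
  U`_1 ^+ 2 - 4%:R * U`_2 * U`_0 != 0 ->
  U * P^`(2) - (n - 1)%:R *: (U^`() * P^`())
    + ((n * (n - 1))%:R / 2%:R) *: (U^`(2) * P) = 0 ->
  a * d - b * c != 0 ->
  U.[x] * P.[x] != 0 ->
  forall r : nat,
    let K s := a *: Apoly n P U s + b *: Bpoly n P U s in
    let L s := c *: Apoly n P U s + d *: Bpoly n P U s in
    (K r.+1).[x] * (L r).[x] != (K r).[x] * (L r.+1).[x].
Proof.
move=> n_ge2 _ _ disc_neq0 _ det_neq0 UPx_neq0 r /=.
rewrite !(hornerD, hornerZ) -subr_eq0.
pose A s := (Apoly n P U s).[x]; pose B s := (Bpoly n P U s).[x].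
rewrite -[X in X != 0]/(casoratian (fun s => a * A s + b * B s)
                                   (fun s => c * A s + d * B s) r).
rewrite (casoratian_lincomb A B) (mulf_neq0 det_neq0) //.
exact: casoratian_AB_neq0.
Qed.
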